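(* Let $f:\mathbb{R}^n\to\mathbb{R}$ be differentiable, $L$-smooth and $m$-strongly convex with $m>0$, and let $x_*$ be the unique point with $\nabla f(x_* )=0$. Let $0<\mu<2$, $\delta>0$, $\alpha>0$, $\eta>0$ and constants $0<c_1\le c_2<+\infty$. Consider the adaptive fractional order accelerated gradient descent (AFOAGD) iteration $$x_{k+1}=y_k-\alpha\,\nabla f(y_k)\,\beta_k\,(\|y_k-y_{k-1}\|_2+\delta)^{1-\mu},\qquad y_k=x_k+\eta(x_k-x_{k-1}),$$ where the scalars $\beta_k>0$ satisfy $0<c_1\le \beta_k(\|y_k-y_{k-1}\|_2+\delta)^{1-\mu}\le c_2<+\infty$ for all $k$. Set $u_k=\nabla f(y_k)\,\beta_k(\|y_k-y_{k-1}\|_2+\delta)^{1-\mu}$, $u_*=0$, and $$e_k=\big[(x_{k-1}-x_* )^\top,\ (x_k-x_* )^\top,\ (u_k-u_* )^\top\big]^\top\in\mathbb{R}^{3n}.$$ Then for all trajectories and all $k$, $$f(x_{k+1})-f(x_* )\le e_k^\top N^1 e_k,$$ where $$N^1=\begin{bmatrix}-\frac{\eta^2 m}{2}I_n & \frac{\eta(\eta+1)m}{2}I_n & -\frac{\eta}{2c_1}I_n\\ \frac{\eta(\eta+1)m}{2}I_n & -\frac{(\eta+1)^2 m}{2}I_n & \frac{\eta+1}{2c_1}I_n\\ -\frac{\eta}{2c_1}I_n & \frac{\eta+1}{2c_1}I_n & \left(\frac12\alpha^2L-\frac{\alpha}{c_2}\right)I_n\end{bmatrix}.$$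
   Context: A differentiable $f$ is $L$-smooth if $\|\nabla f(x)-\nabla f(y)\|_2\le L\|x-y\|_2$ for all $x,y$, and $m$-strongly convex if $m\|x-y\|_2^2\le (x-y)^\top(\nabla f(x)-\nabla f(y))$ for all $x,y$. $I_n$ is the $n\times n$ identity matrix. *)

From HB Require Import structures.
From mathcomp Require Import all_boot all_order all_algebra.
From mathcomp Require Import all_classical all_reals all_analysis.
Set Implicit Arguments. Unset Strict Implicit. Unset Printing Implicit Defensive.
Import Order.TTheory GRing.Theory Num.Theory.
Import numFieldNormedType.Exports.
Local Open Scope ring_scope.

Definition dotv {R : realType} {n : nat} (u v : 'rV[R]_n) : R :=
  \sum_(i < n) u ord0 i * v ord0 i.

Definition norm2 {R : realType} {n : nat} (v : 'rV[R]_n) : R :=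
  Num.sqrt (dotv v v).

Definition is_gradient {R : realType} {n : nat}
  (f : 'rV[R]_n -> R) (g : 'rV[R]_n -> 'rV[R]_n) : Prop :=
  forall x, differentiable f x /\ forall h, 'd f x h = dotv (g x) h.

Definition L_smooth {R : realType} {n : nat} (g : 'rV[R]_n -> 'rV[R]_n) (L : R) :=
  forall x y, norm2 (g x - g y) <= L * norm2 (x - y).

Definition strongly_convex {R : realType} {n : nat} (g : 'rV[R]_n -> 'rV[R]_n) (m : R) :=
  forall x y, m * norm2 (x - y) ^+ 2 <= dotv (x - y) (g x - g y).

Definition N1 {R : realType} (n : nat) (m L alpha eta c1 c2 : R)
  : 'M[R]_(n + (n + n)) :=
  let a11 : 'M[R]_n := (- (eta ^+ 2 * m / 2))%:M in
  let a12 : 'M[R]_n := (eta * (eta + 1) * m / 2)%:M in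
  let a13 : 'M[R]_n := (- (eta / (2 * c1)))%:M in
  let a22 : 'M[R]_n := (- ((eta + 1) ^+ 2 * m / 2))%:M in
  let a23 : 'M[R]_n := ((eta + 1) / (2 * c1))%:M in
  let a33 : 'M[R]_n := (alpha ^+ 2 * L / 2 - alpha / c2)%:M in
  block_mx a11 (row_mx a12 a13)
           (col_mx a12 a13) (block_mx a22 a23 a23 a33).

Definition err_vec {R : realType} {n : nat} (a b c : 'rV[R]_n) : 'cV[R]_(n + (n + n)) :=
  col_mx a^T (col_mx b^T c^T).

Definition qform {R : realType} {p : nat} (N : 'M[R]_p) (e : 'cV[R]_p) : R :=
  (e^T *m N *m e) ord0 ord0.

(* Write w = y_k - x_*, G = grad f(y_k) and s_k for the step scale, so that
   u_k = s_k G and w = (eta + 1)(x_k - x_* ) - eta (x_{k-1} - x_* ).  In these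
   variables the quadratic form is
     e_k^T N^1 e_k = - m/2 |w|^2 + s_k <w, G> / c1 + (alpha^2 L / 2 - alpha / c2) s_k^2 |G|^2.
   The descent lemma for the step x_{k+1} = y_k - alpha s_k G and the strong
   convexity lower bound at x_* give
     f(x_{k+1}) - f(x_* ) <= <w, G> - m/2 |w|^2 - alpha s_k |G|^2 + alpha^2 L s_k^2 |G|^2 / 2,
   and the two bounds c1 <= s_k <= c2 (together with <w, G> >= m |w|^2 >= 0)
   turn the right-hand side into the quadratic form.  Only these bounds on the
   step scale matter, not its particular shape in mu, delta and beta_k. *)

From HB Require Import structures.
From mathcomp Require Import all_boot all_order all_algebra.
From mathcomp Require Import all_classical all_reals all_analysis.
From mathcomp Require Import ring lra.
Set Implicit Arguments. Unset Strict Implicit. Unset Printing Implicit Defensive.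
Import Order.TTheory GRing.Theory Num.Theory.
Import numFieldNormedType.Exports.
Local Open Scope ring_scope.

Section EuclideanInnerProduct.
Variables (R : realType) (n : nat).
Implicit Types (a b c : 'rV[R]_n) (z : R).

Lemma dotvC a b : dotv a b = dotv b a.
Proof. by apply: eq_bigr => i _; rewrite mulrC. Qed.

Lemma dotvDl a b c : dotv (a + b) c = dotv a c + dotv b c.
Proof. by rewrite /dotv -big_split; apply: eq_bigr => i _; rewrite mxE mulrDl. Qed.

Lemma dotvNl a c : dotv (- a) c = - dotv a c.
Proof. by rewrite /dotv -sumrN; apply: eq_bigr => i _; rewrite mxE mulNr. Qed.

Lemma dotvBl a b c : dotv (a - b) c = dotv a c - dotv b c.
Proof. by rewrite dotvDl dotvNl. Qed.

Lemma dotvZl z a c : dotv (z *: a) c = z * dotv a c.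
Proof. by rewrite /dotv mulr_sumr; apply: eq_bigr => i _; rewrite mxE mulrA. Qed.

Lemma dotvDr a b c : dotv c (a + b) = dotv c a + dotv c b.
Proof. by rewrite !(dotvC c) dotvDl. Qed.

Lemma dotvNr a c : dotv c (- a) = - dotv c a.
Proof. by rewrite !(dotvC c) dotvNl. Qed.

Lemma dotvBr a b c : dotv c (a - b) = dotv c a - dotv c b.
Proof. by rewrite !(dotvC c) dotvBl. Qed.

Lemma dotvZr z a c : dotv c (z *: a) = z * dotv c a.
Proof. by rewrite !(dotvC c) dotvZl. Qed.

Lemma dotv0l c : dotv 0 c = 0.
Proof. by rewrite -(scale0r 0) dotvZl mul0r. Qed.

Lemma dotvv_ge0 a : 0 <= dotv a a.
Proof. by rewrite sumr_ge0 // => i _; rewrite -expr2 sqr_ge0. Qed.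

Lemma dotvv_eq0 a : (dotv a a == 0) = (a == 0).
Proof.
apply/idP/eqP => [|->]; last by rewrite dotv0l.
rewrite psumr_eq0 => [/allP a0|i _]; last by rewrite -expr2 sqr_ge0.
apply/rowP => i; rewrite mxE.
by have /implyP/(_ isT) := a0 i (mem_index_enum i); rewrite -expr2 sqrf_eq0 => /eqP.
Qed.

Lemma norm2_ge0 a : 0 <= norm2 a.
Proof. exact: sqrtr_ge0. Qed.

Lemma norm2_sqr a : norm2 a ^+ 2 = dotv a a.
Proof. by rewrite sqr_sqrtr // dotvv_ge0. Qed.

Lemma norm2Z z a : 0 <= z -> norm2 (z *: a) = z * norm2 a.
Proof.
move=> z0; rewrite /norm2 dotvZl dotvZr mulrA -expr2 sqrtrM ?sqr_ge0 //.
by rewrite sqrtr_sqr ger0_norm.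
Qed.

Lemma norm2_gt0 a : a != 0 -> 0 < norm2 a.
Proof. by move=> a0; rewrite sqrtr_gt0 lt0r dotvv_eq0 a0 dotvv_ge0. Qed.

Lemma dotv_le_norm2 a b : dotv a b <= norm2 a * norm2 b.
Proof.
have [->|a0] := eqVneq a 0; first by rewrite dotv0l mulr_ge0 ?norm2_ge0.
have [->|b0] := eqVneq b 0; first by rewrite dotvC dotv0l mulr_ge0 ?norm2_ge0.
have AB_gt0 : 0 < norm2 a * norm2 b by rewrite mulr_gt0 ?norm2_gt0.
have := dotvv_ge0 (norm2 b *: a - norm2 a *: b).
rewrite !(dotvBl, dotvBr, dotvZl, dotvZr) -!norm2_sqr (dotvC b a).
nra.
Qed.

Lemma dotv_mx a b : (a *m b^T) ord0 ord0 = dotv a b.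
Proof. by rewrite !mxE; apply: eq_bigr => i _; rewrite mxE. Qed.

End EuclideanInnerProduct.

Lemma qform_N1 (R : realType) (n : nat) (m L alpha eta c1 c2 : R) (a b c : 'rV[R]_n) :
  let w := (eta + 1) *: b - eta *: a in
  qform (N1 n m L alpha eta c1 c2) (err_vec a b c) =
  - (m / 2) * dotv w w + dotv w c / c1 + (alpha ^+ 2 * L / 2 - alpha / c2) * dotv c c.
Proof.
rewrite /qform /N1 /err_vec /= !tr_col_mx !trmxK !mul_row_block !mul_row_col.
rewrite !mulmxDl !mul_mx_scalar -!scalemxAl !mul_mx_row !mul_row_col.
rewrite !mul_mx_scalar -!scalemxAl !(dotv_mx, mxE).
rewrite !(dotvDl, dotvBl, dotvNl, dotvZl, dotvDr, dotvBr, dotvNr, dotvZr) (dotvC b a).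
rewrite (dotvC c a) (dotvC c b) !invfM.
(* The identity holds for c1 = 0 or c2 = 0 too, so field must not see these inverses. *)
move: c1^-1 c2^-1 => c1V c2V.
by field.
Qed.

Section FirstOrderBounds.
Variables (R : realType) (n : nat) (f : 'rV[R]_n -> R) (g : 'rV[R]_n -> 'rV[R]_n).
Hypothesis f_grad : is_gradient f g.

Lemma is_derive_along_line (y d : 'rV[R]_n) (t : R) :
  is_derive t 1 (fun s : R => f (y + s *: d)) (dotv (g (y + t *: d)) d).
Proof.
have [df dfE] := f_grad (y + t *: d).
have quotE : (fun h : R => h^-1 *: (f (y + (h *: 1 + t) *: d) - f (y + t *: d)))
       = (fun h : R => h^-1 *: (f (h *: d + (y + t *: d)) - f (y + t *: d))).
  by apply: funext => h; rewrite [h *: 1]mulr1 scalerDl addrCA addrA.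
split; first by rewrite /derivable /= /shift /= quotE; apply: diff_derivable.
by rewrite /derive /= /shift /= quotE -/(derive f (y + t *: d) d) deriveE // dfE.
Qed.

Lemma MVT_quadratic_bound (phi dphi : R -> R) (c Q : R) :
  (forall s : R, is_derive s (1 : R) phi (dphi s)) ->
  (forall s : R, 0 < s < 1 -> dphi s - c <= Q * s) ->
  phi 1 - phi 0 <= c + Q / 2.
Proof.
move=> phi_der dphi_le.
pose psi := phi - (fun s => c * s) - (fun s => Q / 2 * (s * s)).
have psi_der s : is_derive s (1 : R) psi (dphi s - c - Q * s).
  have lin_der : is_derive s (1 : R) (cst c * id) (cst c s *: 1 + id s *: 0).
    exact: is_deriveM.
  have sq_der : is_derive s (1 : R) (cst (Q / 2) * (id * id))
      (cst (Q / 2) s *: (id s *: 1 + id s *: 1) + (id * id) s *: 0).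
    by apply: is_deriveM; apply: is_deriveM.
  apply: is_derive_eq (is_deriveB (is_deriveB (phi_der s) lin_der) sq_der) _.
  rewrite /= /GRing.scale /= !mulr1 !mulr0 !addr0.
  by field.
have [|xi xi01] := MVT ltr01 (fun s _ => psi_der s).
  by apply: derivable_within_continuous => s _; exact: (psi_der s).(ex_derive).
rewrite /psi !fctE !(mulr0, mulr1, subr0) => psiE.
rewrite in_itv /= in xi01; have := dphi_le xi xi01.
lra.
Qed.

Lemma L_smooth_descent (L : R) (y d : 'rV[R]_n) :
  L_smooth g L -> f (y + d) <= f y + dotv (g y) d + L / 2 * dotv d d.
Proof.
move=> g_lip.
have dgrad_le s : 0 < s < 1 ->
    dotv (g (y + s *: d)) d - dotv (g y) d <= L * dotv d d * s.
  move=> /andP[s0 _]; rewrite -dotvBl.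
  apply: le_trans (dotv_le_norm2 _ _) _.
  have := g_lip (y + s *: d) y; rewrite addrAC subrr add0r (norm2Z _ (ltW s0)) => lip.
  apply: le_trans (ler_wpM2r (norm2_ge0 _) lip) _.
  by rewrite -norm2_sqr; lra.
have := MVT_quadratic_bound (is_derive_along_line y d) dgrad_le.
rewrite scale1r scale0r addr0.
lra.
Qed.

Lemma strongly_convex_lower_bound (m : R) (y d : 'rV[R]_n) :
  strongly_convex g m -> f y + dotv (g y) d + m / 2 * dotv d d <= f (y + d).
Proof.
move=> g_sconv.
have dgrad_ge s : 0 < s < 1 ->
    - dotv (g (y + s *: d)) d - - dotv (g y) d <= - (m * dotv d d) * s.
  move=> /andP[s0 _].
  have := g_sconv (y + s *: d) y.
  rewrite addrAC subrr add0r (norm2Z _ (ltW s0)) exprMn norm2_sqr dotvZl dotvC dotvBl.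
  have -> : m * (s ^+ 2 * dotv d d) = s * (m * dotv d d * s) by ring.
  rewrite ler_pM2l //; lra.
have := MVT_quadratic_bound (fun s => is_deriveN (is_derive_along_line y d s)) dgrad_ge.
rewrite !fctE scale1r scale0r addr0.
lra.
Qed.

End FirstOrderBounds.

Section GradientStep.
Variables (R : realType) (n : nat) (f : 'rV[R]_n -> R) (g : 'rV[R]_n -> 'rV[R]_n).
Variables (L m : R) (xs : 'rV[R]_n).
Hypotheses (f_grad : is_gradient f g) (g_lip : L_smooth g L)
  (g_sconv : strongly_convex g m) (m_gt0 : 0 < m) (g_xs : g xs = 0).

Lemma gradient_step_bound (y : 'rV[R]_n) (t : R) :
  f (y - t *: g y) - f xs <= dotv (y - xs) (g y) - m / 2 * dotv (y - xs) (y - xs)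
                             - t * dotv (g y) (g y) + L / 2 * t ^+ 2 * dotv (g y) (g y).
Proof.
set w := y - xs; set G := g y.
have := L_smooth_descent f_grad y (- (t *: G)) g_lip.
have := strongly_convex_lower_bound f_grad y (xs - y) g_sconv.
rewrite [y + (xs - y)]addrC subrK -/G -opprB -/w.
rewrite !(dotvNl, dotvNr, dotvZl, dotvZr) (dotvC G w).
lra.
Qed.

Lemma dotv_gradient_ge0 (y : 'rV[R]_n) : 0 <= dotv (y - xs) (g y).
Proof.
have := g_sconv y xs; rewrite g_xs subr0.
by apply: le_trans; apply: mulr_ge0 (ltW m_gt0) (exprn_ge0 _ (norm2_ge0 _)).
Qed.

Lemma scaled_gradient_step_bound (y : 'rV[R]_n) (alpha s c1 c2 : R) :
  0 < alpha -> 0 < c1 -> c1 <= s <= c2 ->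
  f (y - (alpha * s) *: g y) - f xs
    <= - (m / 2) * dotv (y - xs) (y - xs) + dotv (y - xs) (s *: g y) / c1
       + (alpha ^+ 2 * L / 2 - alpha / c2) * dotv (s *: g y) (s *: g y).
Proof.
move=> alpha_gt0 c1_gt0 /andP[c1_le_s s_le_c2].
have s_gt0 : 0 < s := lt_le_trans c1_gt0 c1_le_s.
have c2_gt0 : 0 < c2 := lt_le_trans s_gt0 s_le_c2.
have := gradient_step_bound y (alpha * s).
have P0 := dotv_gradient_ge0 y; have Q0 := dotvv_ge0 (g y).
rewrite dotvZr !dotvZl dotvZr.
set P := dotv (y - xs) (g y) in P0 *; set Q := dotv (g y) (g y) in Q0 *.
have P_le : P <= s * P / c1 by rewrite ler_pdivlMr // mulrC ler_wpM2r.
have Q_le : alpha / c2 * (s * (s * Q)) <= alpha * s * Q.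
  have -> : alpha / c2 * (s * (s * Q)) = alpha * s * Q * (s / c2) by ring.
  apply: ler_piMr; first by rewrite !mulr_ge0 // ltW.
  by rewrite ler_pdivrMr // mul1r.
nra.
Qed.

End GradientStep.

Theorem lemma1 (R : realType) (n : nat)
  (f : 'rV[R]_n -> R) (g : 'rV[R]_n -> 'rV[R]_n) (L m : R) (xs : 'rV[R]_n)
  (mu delta alpha eta c1 c2 : R)
  (x y : nat -> 'rV[R]_n) (beta : nat -> R) :
  is_gradient f g ->
  L_smooth g L ->
  strongly_convex g m ->
  0 < m ->
  g xs = 0 ->
  0 < mu -> mu < 2 -> 0 < delta -> 0 < alpha -> 0 < eta ->
  0 < c1 -> c1 <= c2 ->
  (forall k, (0 < k)%N -> y k = x k + eta *: (x k - x k.-1)) ->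
  (forall k, (0 < k)%N ->
     x k.+1 = y k - alpha *: (beta k * (norm2 (y k - y k.-1) + delta) `^ (1 - mu)) *: g (y k)) ->
  (forall k, (0 < k)%N -> 0 < beta k) ->
  (forall k, (0 < k)%N ->
     c1 <= beta k * (norm2 (y k - y k.-1) + delta) `^ (1 - mu) <= c2) ->
  forall k, (0 < k)%N ->
    let u_k := (beta k * (norm2 (y k - y k.-1) + delta) `^ (1 - mu)) *: g (y k) in
    let u_s : 'rV[R]_n := 0 in
    f (x k.+1) - f xs
      <= qform (N1 n m L alpha eta c1 c2) (err_vec (x k.-1 - xs) (x k - xs) (u_k - u_s)).
Proof.
move=> f_grad g_lip g_sconv m_gt0 g_xs _ _ _ alpha_gt0 _ c1_gt0 _
  y_def x_def _ scale_bounds k k_gt0 /=.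
have w_def : (eta + 1) *: (x k - xs) - eta *: (x k.-1 - xs) = y k - xs.
  by rewrite y_def //; apply/rowP => i; rewrite !mxE; ring.
rewrite subr0 qform_N1 w_def x_def //.
exact: (scaled_gradient_step_bound f_grad g_lip g_sconv m_gt0 g_xs (y k)
          alpha_gt0 c1_gt0 (scale_bounds k k_gt0)).
Qed.
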